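(* Any non-confluent explicit Runge--Kutta method with 4 stages and order 4 has positivity step-size coefficient $\gamma=0$.
   Context: An $m$-stage explicit Runge--Kutta method has strictly lower-triangular $A=(a_{ij})\in\mathbb{R}^{m\times m}$, $b\in\mathbb{R}^m$, nodes $c_i=\sum_ja_{ij}$; it is non-confluent if the $c_i$ are pairwise distinct. Applied to $u_k'=q_k(u,t)(u_{k-1}-u_k)/\Delta x$ ($k=1,\dots,N$, $u_0:=u_N$) with step $\Delta t$: $y^i_k=u^n_k+\sum_{j<i}a_{ij}\xi^j_k(y^j_{k-1}-y^j_k)$, $u^{n+1}_k=u^n_k+\sum_ib_i\xi^i_k(y^i_{k-1}-y^i_k)$, $\xi^j_k=\frac{\Delta t}{\Delta x}q_k(y^j,t_n+c_j\Delta t)$. Treating the $\xi^j_\ell$ as independent variables on the grid $\ell\in\mathbb{Z}$, $u^{n+1}_k=\sum_{i=0}^mP_i(\xi)u^n_{k-i}$ for polynomials $P_i$ (independent of $k$) in the $m(m+1)/2$ variables $\xi^j_\ell$, $1\le j\le m$, $k-(m-j)\le\ell\le k$. The step-size coefficient is $\gamma(A,b)=\sup\{\delta\ge0:P_i(\xi)\ge0\ \forall i,\ \forall\xi\in[0,\delta]^{m(m+1)/2}\}$ (or $0$ if empty). *)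

From HB Require Import structures.
From mathcomp Require Import all_boot all_order all_algebra.
From mathcomp Require Import all_classical all_reals ereal.
Set Implicit Arguments. Unset Strict Implicit. Unset Printing Implicit Defensive.
Import Order.TTheory GRing.Theory Num.Theory.
Local Open Scope ring_scope.
Local Open Scope classical_set_scope.

(* Butcher tableau: A : 'M[R]_m, b : 'rV[R]_m; stages are 0-based here
   (stage j here = stage j+1 of the paper). *)

Definition rk_c (R : realType) (m : nat) (A : 'M[R]_m) (i : 'I_m) : R :=
  \sum_(j < m) A i j.

Definition rk_explicit (R : realType) (m : nat) (A : 'M[R]_m) : Prop :=
  forall i j : 'I_m, (i <= j)%N -> A i j = 0.

Definition rk_nonconfluent (R : realType) (m : nat) (A : 'M[R]_m) : Prop :=
  forall i j : 'I_m, rk_c A i = rk_c A j -> i = j.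

(* (classical) order >= 4: the eight Butcher order conditions for the
   rooted trees with at most 4 vertices *)
Definition rk_order4 (R : realType) (m : nat) (A : 'M[R]_m) (b : 'rV[R]_m)
  : Prop :=
  let c := rk_c A in
  (\sum_(i < m) b ord0 i = 1) /\
      (\sum_(i < m) b ord0 i * c i = 1 / 2) /\
      (\sum_(i < m) b ord0 i * c i ^+ 2 = 1 / 3) /\
      (\sum_(i < m) \sum_(j < m) b ord0 i * A i j * c j = 1 / 6) /\
      (\sum_(i < m) b ord0 i * c i ^+ 3 = 1 / 4) /\
      (\sum_(i < m) \sum_(j < m) b ord0 i * c i * A i j * c j = 1 / 8) /\
      (\sum_(i < m) \sum_(j < m) b ord0 i * A i j * c j ^+ 2 = 1 / 12) /\
      (\sum_(i < m) \sum_(j < m) \sum_(k < m)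
         b ord0 i * A i j * A j k * c k = 1 / 24).

Definition mxnat (R : realType) (m : nat) (A : 'M[R]_m) (i j : nat) : R :=
  match (insub i : option 'I_m), (insub j : option 'I_m) with
  | Some i', Some j' => A i' j'
  | _, _ => 0
  end.

Definition bnat (R : realType) (m : nat) (b : 'rV[R]_m) (i : nat) : R :=
  match (insub i : option 'I_m) with Some i' => b ord0 i' | None => 0 end.

(* The first n stage vectors y^0,...,y^{n-1} on the grid Z, for the scheme
   y^i_k = u_k + sum_{j<i} a_ij xi^j_k (y^j_{k-1} - y^j_k),
   where xi j l is the (independent) variable xi^j_l. *)
Fixpoint rk_stages (R : realType) (m : nat) (A : 'M[R]_m)
  (xi : nat -> int -> R) (u : int -> R) (n : nat) : seq (int -> R) :=
  match n with
  | 0 => [::]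
  | n'.+1 =>
      let s := rk_stages A xi u n' in
      rcons s (fun l : int => u l + \sum_(j < n')
        mxnat A n' j * xi j l *
          (nth (fun _ => 0) s j (l - 1) - nth (fun _ => 0) s j l))
  end.

Definition rk_step (R : realType) (m : nat) (A : 'M[R]_m) (b : 'rV[R]_m)
  (xi : nat -> int -> R) (u : int -> R) (k : int) : R :=
  let s := rk_stages A xi u m in
  u k + \sum_(i < m) bnat b i * xi i k *
          (nth (fun _ => 0) s i (k - 1) - nth (fun _ => 0) s i k).

(* P_i(xi): the coefficient of u^n_{k-i} in u^{n+1}_k (taken at k = 0),
   obtained by feeding the unit impulse at grid point -i. *)
Definition rk_P (R : realType) (m : nat) (A : 'M[R]_m) (b : 'rV[R]_m)
  (i : nat) (xi : nat -> int -> R) : R :=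
  rk_step A b xi (fun l : int => (l == - (i%:Z))%:R) 0.

Definition rk_pos_ok (R : realType) (m : nat) (A : 'M[R]_m) (b : 'rV[R]_m)
  (delta : R) : Prop :=
  forall xi : nat -> int -> R,
    (forall (j : nat) (l : int), (j < m)%N ->
        - ((m - 1 - j)%N%:Z) <= l <= 0 -> 0 <= xi j l <= delta) ->
    forall i : nat, (i <= m)%N -> 0 <= rk_P A b i xi.

(* step-size coefficient gamma(A,b) = sup{delta >= 0 admissible}, or 0 if
   that set is empty (realized by adjoining 0); value in the extended reals *)
Definition rk_gamma (R : realType) (m : nat) (A : 'M[R]_m) (b : 'rV[R]_m)
  : \bar R :=
  ereal_sup ([set 0%:E] `|`
     [set (d%:E) | d in [set d : R | 0 <= d /\ rk_pos_ok A b d]]).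

From HB Require Import structures.
From mathcomp Require Import all_boot all_order all_algebra.
From mathcomp Require Import all_classical all_reals ereal.
From mathcomp Require Import lra ring.
Import Order.TTheory GRing.Theory Num.Theory.
Local Open Scope ring_scope.

(* A variable [xi^i_0 = d > 0] alone makes [P_1 = b_i d], and the pair
   [xi^i_0 = xi^j_{-1} = d] with [j < i] makes [P_2 = b_i a_ij d^2]; so a positive
   step-size coefficient forces [b_i >= 0] and [b_i a_ij >= 0].  For an explicit
   four-stage method of order four with [c_2 <> 0] the order conditions imply
   [c_4 = 1] and [sum_i b_i a_ij = b_j (1 - c_j)], which fix [b_2, b_3, b_4] and
   [b_3 a_32] as rational functions of [c_2, c_3].  If [c_2 < c_3] they make
   [b_3 a_31 + b_4 a_42] negative, and if [c_3 < c_2] they make [b_4 a_41]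
   negative. *)

Section Stages.
Variables (R : realType) (m : nat) (A : 'M[R]_m) (xi : nat -> int -> R) (u : int -> R).
Local Notation stage n j := (nth (fun _ => 0) (rk_stages A xi u n) j).

Lemma size_rk_stages n : size (rk_stages A xi u n) = n.
Proof. by elim: n => [|n IHn] //=; rewrite size_rcons IHn. Qed.

Lemma rk_stages_prefix n j : (j < n)%N -> stage n j = stage j.+1 j.
Proof.
elim: n => [|n IHn] // /[!ltnS] jn.
rewrite /= nth_rcons size_rk_stages; case: ltngtP jn => // [jn _|<- _].
  by rewrite IHn.
by rewrite /= nth_rcons size_rk_stages ltnn eqxx.
Qed.

Lemma rk_stageE n j l : (j < n)%N ->
  stage n j l = u l + \sum_(k < j) mxnat A j k * xi k l * (stage n k (l - 1) - stage n k l).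
Proof.
move=> jn; have prefix k : (k < j)%N -> stage j k = stage n k.
  by move=> kj; rewrite !rk_stages_prefix // (ltn_trans kj jn).
rewrite rk_stages_prefix //= nth_rcons size_rk_stages ltnn eqxx.
by congr (_ + _); apply: eq_bigr => k _; rewrite !prefix.
Qed.

Lemma rk_stage_id n j l : (j < n)%N -> (forall k, (k < j)%N -> xi k l = 0) ->
  stage n j l = u l.
Proof.
move=> jn xi0; rewrite rk_stageE // big1 ?addr0 // => k _.
by rewrite xi0 // mulr0 mul0r.
Qed.

End Stages.

Lemma big_ord_only {R : nmodType} {n i0 : nat} {F : 'I_n -> R} (i0n : (i0 < n)%N) :
  (forall i : 'I_n, (i : nat) != i0 -> F i = 0) -> \sum_(i < n) F i = F (Ordinal i0n).
Proof.
by move=> F0; rewrite (bigD1 (Ordinal i0n)) //= big1 ?addr0.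
Qed.

Section Impulses.
Context {R : realType} {m : nat} {A : 'M[R]_m} {b : 'rV[R]_m}.

Definition xi_point (i : nat) (d : R) : nat -> int -> R :=
  fun j l => if (j == i) && (l == 0) then d else 0.

Definition xi_pair (i j : nat) (d : R) : nat -> int -> R :=
  fun k l => if ((k == i) && (l == 0)) || ((k == j) && (l == -1)) then d else 0.

Lemma rk_P_point i d : (i < m)%N -> rk_P A b 1 (xi_point i d) = bnat b i * d.
Proof.
move=> im; rewrite /rk_P /rk_step (big_ord_only im) => [|k /negbTE ki]; last first.
  by rewrite /xi_point ki mulr0 mul0r.
have xi0 l k : (k < i)%N -> xi_point i d k l = 0 by move=> ki; rewrite /xi_point ltn_eqF.
rewrite /= !rk_stage_id // => [|k /xi0 //|k /xi0 //].
by rewrite /xi_point !eqxx /= add0r subr0 mulr1.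
Qed.

Lemma rk_P_pair i j d : (j < i < m)%N ->
  rk_P A b 2 (xi_pair i j d) = bnat b i * d * (mxnat A i j * d).
Proof.
case/andP=> ji im; have jm := ltn_trans ji im.
rewrite /rk_P /rk_step (big_ord_only im) => [|k /negbTE ki]; last first.
  by rewrite /xi_pair ki andbF mulr0 mul0r.
have xi0 l k : (k < j)%N -> xi_pair i j d k l = 0.
  by move=> kj; rewrite /xi_pair !ltn_eqF // (ltn_trans kj ji).
rewrite /= [X in _ - X]rk_stage_id // => [|k ki]; last first.
  by rewrite /xi_pair ltn_eqF //= andbF.
rewrite rk_stageE // (big_ord_only ji) => [|k /negbTE kj]; last first.
  by rewrite /xi_pair kj ltn_eqF //= mulr0 mul0r.
rewrite /= !rk_stage_id // => [|k /xi0 //|k /xi0 //].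
by rewrite /xi_pair !eqxx (ltn_eqF ji) (gtn_eqF ji) /= !add0r !subr0 !mulr1.
Qed.

Lemma bnat_ord (i : 'I_m) : bnat b i = b ord0 i.
Proof. by rewrite /bnat valK. Qed.

Lemma mxnat_ord (i j : 'I_m) : mxnat A i j = A i j.
Proof. by rewrite /mxnat !valK. Qed.

Lemma rk_pos_ok_b_ge0 {d : R} : 0 < d -> rk_pos_ok A b d -> forall i : 'I_m, 0 <= b ord0 i.
Proof.
move=> d_gt0 ok i.
have bound j l : 0 <= xi_point i d j l <= d.
  by rewrite /xi_point; case: ifP => _; rewrite lexx (ltW d_gt0).
have := ok _ (fun j l _ _ => bound j l) 1%N (leq_ltn_trans (leq0n i) (ltn_ord i)).
by rewrite rk_P_point // bnat_ord pmulr_lge0.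
Qed.

Lemma rk_pos_ok_bA_ge0 {d : R} : 0 < d -> rk_pos_ok A b d ->
  forall i j : 'I_m, (j < i)%N -> 0 <= b ord0 i * A i j.
Proof.
move=> d_gt0 ok i j ji.
have bound k l : 0 <= xi_pair i j d k l <= d.
  by rewrite /xi_pair; case: ifP => _; rewrite lexx (ltW d_gt0).
have two_le_m : (1 < m)%N := leq_ltn_trans (leq_ltn_trans (leq0n j) ji) (ltn_ord i).
have := ok _ (fun k l _ _ => bound k l) 2%N two_le_m.
by rewrite rk_P_pair ?ji ?ltn_ord // bnat_ord mxnat_ord mulrACA pmulr_lge0 // mulr_gt0.
Qed.

End Impulses.

Lemma orthogonal3_eq0 {R : idomainType} {p1 p2 p3 q1 q2 q3 r1 r2 r3 g1 g2 g3 : R} :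
  p1 * (q2 * r3 - q3 * r2) - p2 * (q1 * r3 - q3 * r1) + p3 * (q1 * r2 - q2 * r1) != 0 ->
  g1 * p1 + g2 * p2 + g3 * p3 = 0 -> g1 * q1 + g2 * q2 + g3 * q3 = 0 ->
  g1 * r1 + g2 * r2 + g3 * r3 = 0 -> [/\ g1 = 0, g2 = 0 & g3 = 0].
Proof.
set D := _ - _ + _ => D_neq0 gp gq gr.
have cancelD x : x * D = 0 -> x = 0.
  by move/eqP; rewrite mulf_eq0 (negbTE D_neq0) orbF => /eqP.
split; apply: cancelD.
- have -> : g1 * D = (q2 * r3 - q3 * r2) * (g1 * p1 + g2 * p2 + g3 * p3)
    - (p2 * r3 - p3 * r2) * (g1 * q1 + g2 * q2 + g3 * q3)
    + (p2 * q3 - p3 * q2) * (g1 * r1 + g2 * r2 + g3 * r3) by rewrite /D; ring.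
  by rewrite gp gq gr; ring.
- have -> : g2 * D = - (q1 * r3 - q3 * r1) * (g1 * p1 + g2 * p2 + g3 * p3)
    + (p1 * r3 - p3 * r1) * (g1 * q1 + g2 * q2 + g3 * q3)
    - (p1 * q3 - p3 * q1) * (g1 * r1 + g2 * r2 + g3 * r3) by rewrite /D; ring.
  by rewrite gp gq gr; ring.
- have -> : g3 * D = (q1 * r2 - q2 * r1) * (g1 * p1 + g2 * p2 + g3 * p3)
    - (p1 * r2 - p2 * r1) * (g1 * q1 + g2 * q2 + g3 * q3)
    + (p1 * q2 - p2 * q1) * (g1 * r1 + g2 * r2 + g3 * r3) by rewrite /D; ring.
  by rewrite gp gq gr; ring.
Qed.

Section FourStageOrderConditions.
Context {R : realFieldType} {c2 c3 c4 a32 a42 a43 b2 b3 b4 : R}.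
Hypotheses
  (tree_c : b2 * c2 + b3 * c3 + b4 * c4 = 1 / 2)
  (tree_c2 : b2 * c2 ^+ 2 + b3 * c3 ^+ 2 + b4 * c4 ^+ 2 = 1 / 3)
  (tree_c3 : b2 * c2 ^+ 3 + b3 * c3 ^+ 3 + b4 * c4 ^+ 3 = 1 / 4)
  (tree_Ac : b3 * a32 * c2 + b4 * a42 * c2 + b4 * a43 * c3 = 1 / 6)
  (tree_cAc : b3 * c3 * a32 * c2 + b4 * c4 * a42 * c2 + b4 * c4 * a43 * c3 = 1 / 8)
  (tree_Ac2 : b3 * a32 * c2 ^+ 2 + b4 * a42 * c2 ^+ 2 + b4 * a43 * c3 ^+ 2 = 1 / 12)
  (tree_AAc : b4 * a43 * a32 * c2 = 1 / 24).

(* [h] is orthogonal to [b] and to [b * c], hence parallel to their cross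
   product [y]; by Lagrange's identity [y] pairs with the cross product [x] of
   [c] and [c ^+ 2] to [(b.c)(b.c^3) - (b.c^2)^2 = 1/72]. *)
Lemma order4_det_neq0 {h2 h3 h4 : R} :
  h2 != 0 -> b2 * h2 + b3 * h3 + b4 * h4 = 0 ->
  b2 * c2 * h2 + b3 * c3 * h3 + b4 * c4 * h4 = 0 ->
  c2 * (c3 ^+ 2 * h4 - c4 ^+ 2 * h3) - c3 * (c2 ^+ 2 * h4 - c4 ^+ 2 * h2)
    + c4 * (c2 ^+ 2 * h3 - c3 ^+ 2 * h2) != 0.
Proof.
move=> h2_neq0 bh bch; apply: contra_neq h2_neq0 => det0.
pose x2 := c3 * c4 ^+ 2 - c4 * c3 ^+ 2; pose x3 := c4 * c2 ^+ 2 - c2 * c4 ^+ 2.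
pose x4 := c2 * c3 ^+ 2 - c3 * c2 ^+ 2.
pose y2 := b3 * b4 * (c4 - c3); pose y3 := b4 * b2 * (c2 - c4).
pose y4 := b2 * b3 * (c3 - c2).
have lagrange : x2 * y2 + x3 * y3 + x4 * y4 = 1 / 72.
  have -> : x2 * y2 + x3 * y3 + x4 * y4 = (b2 * c2 + b3 * c3 + b4 * c4)
      * (b2 * c2 ^+ 3 + b3 * c3 ^+ 3 + b4 * c4 ^+ 3)
      - (b2 * c2 ^+ 2 + b3 * c3 ^+ 2 + b4 * c4 ^+ 2) ^+ 2 by rewrite /x2 /x3 /x4 /y2 /y3 /y4; ring.
  by rewrite tree_c tree_c2 tree_c3; field.
have triple : h2 * (x2 * y2 + x3 * y3 + x4 * y4) - y2 * (x2 * h2 + x3 * h3 + x4 * h4)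
    = x3 * (b4 * (b2 * c2 * h2 + b3 * c3 * h3 + b4 * c4 * h4)
            - b4 * c4 * (b2 * h2 + b3 * h3 + b4 * h4))
      - x4 * (b3 * (b2 * c2 * h2 + b3 * c3 * h3 + b4 * c4 * h4)
            - b3 * c3 * (b2 * h2 + b3 * h3 + b4 * h4)).
  by rewrite /x2 /x3 /x4 /y2 /y3 /y4; ring.
have xh0 : x2 * h2 + x3 * h3 + x4 * h4 = 0 by rewrite -det0 /x2 /x3 /x4; ring.
by move: triple; rewrite lagrange xh0 bh bch; lra.
Qed.

(* The defects [g_j = sum_i b_i a_ij - b_j (1 - c_j)] are orthogonal to [c],
   [c ^+ 2] and [h_i = sum_j a_ij c_j - c_i ^+ 2 / 2]. *)
Lemma order4_simplifying : c2 != 0 ->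
  [/\ c4 = 1, b4 * a43 = b3 * (1 - c3) & b3 * a32 + b4 * a42 = b2 * (1 - c2)].
Proof.
move=> c2_neq0.
pose g2 := b3 * a32 + b4 * a42 - b2 * (1 - c2); pose g3 := b4 * a43 - b3 * (1 - c3).
pose g4 := - (b4 * (1 - c4)).
pose h2 := - (c2 ^+ 2) / 2; pose h3 := a32 * c2 - c3 ^+ 2 / 2.
pose h4 := a42 * c2 + a43 * c3 - c4 ^+ 2 / 2.
have gc : g2 * c2 + g3 * c3 + g4 * c4 = 0.
  have -> : g2 * c2 + g3 * c3 + g4 * c4 = (b3 * a32 * c2 + b4 * a42 * c2 + b4 * a43 * c3)
     - (b2 * c2 + b3 * c3 + b4 * c4) + (b2 * c2 ^+ 2 + b3 * c3 ^+ 2 + b4 * c4 ^+ 2).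
    by rewrite /g2 /g3 /g4; ring.
  by rewrite tree_Ac tree_c tree_c2; field.
have gc2 : g2 * c2 ^+ 2 + g3 * c3 ^+ 2 + g4 * c4 ^+ 2 = 0.
  have -> : g2 * c2 ^+ 2 + g3 * c3 ^+ 2 + g4 * c4 ^+ 2
     = (b3 * a32 * c2 ^+ 2 + b4 * a42 * c2 ^+ 2 + b4 * a43 * c3 ^+ 2)
     - (b2 * c2 ^+ 2 + b3 * c3 ^+ 2 + b4 * c4 ^+ 2)
     + (b2 * c2 ^+ 3 + b3 * c3 ^+ 3 + b4 * c4 ^+ 3) by rewrite /g2 /g3 /g4; ring.
  by rewrite tree_Ac2 tree_c2 tree_c3; field.
have gh : g2 * h2 + g3 * h3 + g4 * h4 = 0.
  have -> : g2 * h2 + g3 * h3 + g4 * h4 = b4 * a43 * a32 * c2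
     - (b3 * a32 * c2 + b4 * a42 * c2 + b4 * a43 * c3)
     + (b3 * c3 * a32 * c2 + b4 * c4 * a42 * c2 + b4 * c4 * a43 * c3)
     - (g2 * c2 ^+ 2 + g3 * c3 ^+ 2 + g4 * c4 ^+ 2) / 2.
    by rewrite /g2 /g3 /g4 /h2 /h3 /h4; ring.
  by rewrite tree_AAc tree_Ac tree_cAc gc2; field.
have bh : b2 * h2 + b3 * h3 + b4 * h4 = 0.
  have -> : b2 * h2 + b3 * h3 + b4 * h4 = (b3 * a32 * c2 + b4 * a42 * c2 + b4 * a43 * c3)
     - (b2 * c2 ^+ 2 + b3 * c3 ^+ 2 + b4 * c4 ^+ 2) / 2 by rewrite /h2 /h3 /h4; ring.
  by rewrite tree_Ac tree_c2; field.
have bch : b2 * c2 * h2 + b3 * c3 * h3 + b4 * c4 * h4 = 0.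
  have -> : b2 * c2 * h2 + b3 * c3 * h3 + b4 * c4 * h4
     = (b3 * c3 * a32 * c2 + b4 * c4 * a42 * c2 + b4 * c4 * a43 * c3)
     - (b2 * c2 ^+ 3 + b3 * c3 ^+ 3 + b4 * c4 ^+ 3) / 2 by rewrite /h2 /h3 /h4; ring.
  by rewrite tree_cAc tree_c3; field.
have h2_neq0 : h2 != 0 by rewrite /h2 mulf_neq0 ?invr_eq0 ?oppr_eq0 ?sqrf_eq0 ?pnatr_eq0.
have [g2_0 g3_0 g4_0] := orthogonal3_eq0 (order4_det_neq0 h2_neq0 bh bch) gc gc2 gh.
have b4_neq0 : b4 != 0 by apply/eqP => b4_0; move: tree_AAc; rewrite b4_0 !mul0r; lra.
split.
- by move/eqP: g4_0; rewrite oppr_eq0 mulf_eq0 (negbTE b4_neq0) subr_eq0 => /eqP.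
- by move: g3_0; rewrite /g3; lra.
- by move: g2_0; rewrite /g2; lra.
Qed.

End FourStageOrderConditions.

(* The quadrature rule with nodes [0, c2, c3, 1] is exact on cubics; apply it
   to [x (x - c3) (x - 1)], [x (x - c2) (x - 1)] and [x (x - c2) (x - c3)]. *)
Lemma order4_weights {R : realFieldType} {c2 c3 b2 b3 b4 : R} :
  b2 * c2 + b3 * c3 + b4 = 1 / 2 -> b2 * c2 ^+ 2 + b3 * c3 ^+ 2 + b4 = 1 / 3 ->
  b2 * c2 ^+ 3 + b3 * c3 ^+ 3 + b4 = 1 / 4 ->
  [/\ 12 * b2 * c2 * (c2 - c3) * (c2 - 1) = 2 * c3 - 1,
      12 * b3 * c3 * (c3 - c2) * (c3 - 1) = 2 * c2 - 1 &
      12 * b4 * (1 - c2) * (1 - c3) = 3 - 4 * c2 - 4 * c3 + 6 * c2 * c3].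
Proof.
move=> tree_c tree_c2 tree_c3; split.
- have -> : 12 * b2 * c2 * (c2 - c3) * (c2 - 1) = 12 * ((b2 * c2 ^+ 3 + b3 * c3 ^+ 3 + b4)
      - (1 + c3) * (b2 * c2 ^+ 2 + b3 * c3 ^+ 2 + b4) + c3 * (b2 * c2 + b3 * c3 + b4)) by ring.
  by rewrite tree_c tree_c2 tree_c3; field.
- have -> : 12 * b3 * c3 * (c3 - c2) * (c3 - 1) = 12 * ((b2 * c2 ^+ 3 + b3 * c3 ^+ 3 + b4)
      - (1 + c2) * (b2 * c2 ^+ 2 + b3 * c3 ^+ 2 + b4) + c2 * (b2 * c2 + b3 * c3 + b4)) by ring.
  by rewrite tree_c tree_c2 tree_c3; field.
- have -> : 12 * b4 * (1 - c2) * (1 - c3) = 12 * ((b2 * c2 ^+ 3 + b3 * c3 ^+ 3 + b4)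
      - (c2 + c3) * (b2 * c2 ^+ 2 + b3 * c3 ^+ 2 + b4) + c2 * c3 * (b2 * c2 + b3 * c3 + b4)).
    by ring.
  by rewrite tree_c tree_c2 tree_c3; field.
Qed.

Lemma node_poly_lt0 {R : realFieldType} {s t : R} :
  1 < 2 * s -> s < 1 -> 0 < t -> 2 * t <= 1 ->
  4 * (1 - 3 * s + 3 * s ^+ 2) * t ^+ 2 + (-5 + 15 * s - 12 * s ^+ 2) * t
    + 2 * (1 - s) * (1 - 2 * s) < 0.
Proof.
move=> s_gt s_lt1 t_gt0 t_le.
have -> : 4 * (1 - 3 * s + 3 * s ^+ 2) * t ^+ 2 + (-5 + 15 * s - 12 * s ^+ 2) * t
    + 2 * (1 - s) * (1 - 2 * s) = (1 - 2 * t) * (2 * (1 - s) * (1 - 2 * s))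
    + 2 * t * ((s - 1 / 2) * (s - 1)) + 4 * (1 - 3 * s + 3 * s ^+ 2) * (t * (t - 1 / 2)).
  by field.
have q1 : (1 - 2 * t) * (2 * (1 - s) * (1 - 2 * s)) <= 0.
  by apply: mulr_ge0_le0; [lra | apply: mulr_ge0_le0; [apply: mulr_ge0|]; lra].
have q2 : 2 * t * ((s - 1 / 2) * (s - 1)) < 0.
  by rewrite pmulr_rlt0 ?mulr_gt0 // pmulr_rlt0; lra.
have q3 : 4 * (1 - 3 * s + 3 * s ^+ 2) * (t * (t - 1 / 2)) <= 0.
  apply: mulr_ge0_le0; last by apply: mulr_ge0_le0; lra.
  have : 0 <= (2 * s - 1) ^+ 2 by apply: sqr_ge0.
  by lra.
lra.
Qed.

Section FourStageSigns.
Context {R : realFieldType} {c2 c3 b2 b3 b4 K : R}.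

(* [K] stands for [b3 a32]; the last four hypotheses are [b3 a31, b4 a41,
   b4 a42, b4 a43 >= 0] rewritten with the simplifying conditions. *)
Hypotheses
  (weight2 : 12 * b2 * c2 * (c2 - c3) * (c2 - 1) = 2 * c3 - 1)
  (weight3 : 12 * b3 * c3 * (c3 - c2) * (c3 - 1) = 2 * c2 - 1)
  (weight4 : 12 * b4 * (1 - c2) * (1 - c3) = 3 - 4 * c2 - 4 * c3 + 6 * c2 * c3)
  (tree_AAc : 24 * K * c2 * (1 - c3) = 1)
  (b2_ge0 : 0 <= b2) (b3_ge0 : 0 <= b3) (K_ge0 : 0 <= K)
  (w31 : 0 <= b3 * c3 - K) (w41 : 0 <= b4 - (b2 * (1 - c2) - K) - b3 * (1 - c3))
  (w42 : 0 <= b2 * (1 - c2) - K) (w43 : 0 <= b3 * (1 - c3)).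

Lemma K_gt0 : 0 < K.
Proof.
rewrite lt0r K_ge0 andbT; apply/eqP => K0.
by move: tree_AAc; rewrite K0 !mulr0 mul0r; lra.
Qed.

Lemma b3_gt0 : 0 < b3.
Proof.
rewrite lt0r b3_ge0 andbT; apply/eqP => b3_0.
by move: w31 K_gt0; rewrite b3_0 mul0r; lra.
Qed.

Lemma c3_lt1 : c3 < 1.
Proof.
rewrite -subr_gt0 lt0r -(pmulr_rge0 _ b3_gt0) w43 andbT; apply/eqP => c3_1.
by move: tree_AAc; rewrite c3_1 mulr0; lra.
Qed.

Lemma c2_gt0 : 0 < c2.
Proof.
have pos : 0 < 24 * K * (1 - c3) by rewrite mulr_gt0 ?pmulr_rgt0 ?K_gt0 ?subr_gt0 ?c3_lt1.
by rewrite -(pmulr_rgt0 _ pos); move: tree_AAc; lra.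
Qed.

Lemma nodes_lt_absurd : c2 < c3 -> False.
Proof.
move=> c2_lt; have c2_pos := c2_gt0; have c3_lt_one := c3_lt1.
have key : 24 * c2 * (c3 - c2) * (1 - c3) * ((b3 * c3 - K) + (b2 * (1 - c2) - K))
    = - ((2 * c2 - 1) ^+ 2 + (2 * c3 - 1) ^+ 2).
  have -> : 24 * c2 * (c3 - c2) * (1 - c3) * ((b3 * c3 - K) + (b2 * (1 - c2) - K))
      = - 2 * c2 * (12 * b3 * c3 * (c3 - c2) * (c3 - 1))
        + 2 * (1 - c3) * (12 * b2 * c2 * (c2 - c3) * (c2 - 1))
        - 2 * (c3 - c2) * (24 * K * c2 * (1 - c3)) by ring.
  by rewrite weight2 weight3 tree_AAc; ring.
have : 0 <= 24 * c2 * (c3 - c2) * (1 - c3) * ((b3 * c3 - K) + (b2 * (1 - c2) - K)).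
  apply: mulr_ge0; last exact: addr_ge0.
  by apply: mulr_ge0; [apply: mulr_ge0; [apply: mulr_ge0|]|]; lra.
have : 0 < (c3 - c2) ^+ 2 by rewrite exprn_gt0 ?subr_gt0.
have : 0 <= (2 * c2 - 1 + (2 * c3 - 1)) ^+ 2 by apply: sqr_ge0.
by rewrite key; nra.
Qed.

Lemma nodes_gt_absurd : c3 < c2 -> False.
Proof.
move=> c3_lt; have c2_pos := c2_gt0; have c3_lt_one := c3_lt1; have K_pos := K_gt0.
have c3_gt0 : 0 < c3.
  rewrite ltNge; apply/negP => c3_le0.
  by have := mulr_ge0_le0 b3_ge0 c3_le0; move: w31; lra.
have c2_gt : 1 < 2 * c2.
  have : 0 < 12 * b3 * c3 * (c2 - c3) * (1 - c3).
    by apply: mulr_gt0; [apply: mulr_gt0; [apply: mulr_gt0; [apply: mulr_gt0|]|]|];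
      rewrite ?b3_gt0 //; lra.
  by move: weight3; lra.
have c2_lt1 : c2 < 1.
  rewrite ltNge; apply/negP => c2_ge1.
  have : 1 - c2 <= 0 by lra.
  by move/(mulr_ge0_le0 b2_ge0); move: w42; lra.
have c3_le : 2 * c3 <= 1.
  have : 0 <= 12 * b2 * c2 * (c2 - c3) * (1 - c2).
    by apply: mulr_ge0; [apply: mulr_ge0; [apply: mulr_ge0; [apply: mulr_ge0|]|]|];
      move: b2_ge0; lra.
  by move: weight2; lra.
pose N := 4 * (1 - 3 * c2 + 3 * c2 ^+ 2) * c3 ^+ 2 + (-5 + 15 * c2 - 12 * c2 ^+ 2) * c3
  + 2 * (1 - c2) * (1 - 2 * c2).
have key : 24 * c2 * c3 * (1 - c2) * (1 - c3) * (c2 - c3)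
    * (b4 - (b2 * (1 - c2) - K) - b3 * (1 - c3)) = (c2 - c3) * N.
  have -> : 24 * c2 * c3 * (1 - c2) * (1 - c3) * (c2 - c3)
      * (b4 - (b2 * (1 - c2) - K) - b3 * (1 - c3))
      = 2 * c2 * c3 * (c2 - c3) * (12 * b4 * (1 - c2) * (1 - c3))
        + 2 * c3 * (1 - c2) * (1 - c3) * (12 * b2 * c2 * (c2 - c3) * (c2 - 1))
        + c3 * (1 - c2) * (c2 - c3) * (24 * K * c2 * (1 - c3))
        - 2 * c2 * (1 - c2) * (1 - c3) * (12 * b3 * c3 * (c3 - c2) * (c3 - 1)) by ring.
  by rewrite weight2 weight3 weight4 tree_AAc /N; ring.
have : 0 <= 24 * c2 * c3 * (1 - c2) * (1 - c3) * (c2 - c3)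
    * (b4 - (b2 * (1 - c2) - K) - b3 * (1 - c3)).
  apply: mulr_ge0 w41.
  by apply: mulr_ge0; [apply: mulr_ge0; [apply: mulr_ge0; [apply: mulr_ge0|]|]|]; lra.
rewrite key pmulr_rge0 ?subr_gt0 //.
by have := node_poly_lt0 c2_gt c2_lt1 c3_gt0 c3_le; rewrite /N; lra.
Qed.

End FourStageSigns.

Lemma order4_positivity_absurd {R : realFieldType}
    {c2 c3 c4 a31 a32 a41 a42 a43 b2 b3 b4 : R} :
  c3 = a31 + a32 -> c4 = a41 + a42 + a43 -> c2 != 0 -> c2 != c3 ->
  b2 * c2 + b3 * c3 + b4 * c4 = 1 / 2 ->
  b2 * c2 ^+ 2 + b3 * c3 ^+ 2 + b4 * c4 ^+ 2 = 1 / 3 ->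
  b2 * c2 ^+ 3 + b3 * c3 ^+ 3 + b4 * c4 ^+ 3 = 1 / 4 ->
  b3 * a32 * c2 + b4 * a42 * c2 + b4 * a43 * c3 = 1 / 6 ->
  b3 * c3 * a32 * c2 + b4 * c4 * a42 * c2 + b4 * c4 * a43 * c3 = 1 / 8 ->
  b3 * a32 * c2 ^+ 2 + b4 * a42 * c2 ^+ 2 + b4 * a43 * c3 ^+ 2 = 1 / 12 ->
  b4 * a43 * a32 * c2 = 1 / 24 ->
  0 <= b2 -> 0 <= b3 -> 0 <= b3 * a31 -> 0 <= b3 * a32 ->
  0 <= b4 * a41 -> 0 <= b4 * a42 -> 0 <= b4 * a43 -> False.
Proof.
move=> row3 row4 c2_neq0 c2_neq_c3 tree_c tree_c2 tree_c3 tree_Ac tree_cAc tree_Ac2 tree_AAc.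
move=> b2_ge0 b3_ge0 w31 w32 w41 w42 w43.
have [c4_1 simp3 simp2] :=
  order4_simplifying tree_c tree_c2 tree_c3 tree_Ac tree_cAc tree_Ac2 tree_AAc c2_neq0.
rewrite c4_1 !expr1n !mulr1 in tree_c tree_c2 tree_c3.
have [weight2 weight3 weight4] := order4_weights tree_c tree_c2 tree_c3.
have tree4 : 24 * (b3 * a32) * c2 * (1 - c3) = 1 by move: tree_AAc; rewrite simp3; lra.
have v31 : 0 <= b3 * c3 - b3 * a32 by rewrite row3; lra.
have v42 : 0 <= b2 * (1 - c2) - b3 * a32 by rewrite -simp2; lra.
have v41 : 0 <= b4 - (b2 * (1 - c2) - b3 * a32) - b3 * (1 - c3).
  by rewrite -simp2 -simp3 (_ : a41 = 1 - a42 - a43) in w41 *; lra.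
have v43 : 0 <= b3 * (1 - c3) by rewrite -simp3.
case: ltgtP c2_neq_c3 => // [lt|gt] _.
- exact: nodes_lt_absurd weight2 weight3 tree4 b3_ge0 w32 v31 v42 v43 lt.
- exact: nodes_gt_absurd weight2 weight3 weight4 tree4 b2_ge0 b3_ge0 w32 v31 v41 v42 v43 gt.
Qed.

Lemma sum_ord4 {V : nmodType} (F : 'I_4 -> V) :
  \sum_(i < 4) F i = F (inord 0) + F (inord 1) + F (inord 2) + F (inord 3).
Proof.
rewrite !big_ord_recl big_ord0 addr0 !addrA.
by congr (_ + _ + _ + _); congr F; apply/val_inj; rewrite /= inordK.
Qed.

Section FourStages.
Context {R : realType} {A : 'M[R]_4} {b : 'rV[R]_4}.
Hypothesis explicitA : rk_explicit A.
Local Notation a i j := (A (inord i) (inord j)).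
Local Notation c i := (rk_c A (inord i)).

Lemma explicit4_entry0 i j : (i <= j < 4)%N -> a i j = 0.
Proof. by case/andP=> ij j4; apply: explicitA; rewrite !inordK // (leq_ltn_trans ij j4). Qed.

Let upper_entries0 := (explicit4_entry0 0 0 isT, explicit4_entry0 0 1 isT,
  explicit4_entry0 0 2 isT, explicit4_entry0 0 3 isT, explicit4_entry0 1 1 isT,
  explicit4_entry0 1 2 isT, explicit4_entry0 1 3 isT, explicit4_entry0 2 2 isT,
  explicit4_entry0 2 3 isT, explicit4_entry0 3 3 isT).

Lemma explicit4_nodes :
  [/\ c 0 = 0, c 1 = a 1 0, c 2 = a 2 0 + a 2 1 & c 3 = a 3 0 + a 3 1 + a 3 2].
Proof.
have cE i : c i = a i 0 + a i 1 + a i 2 + a i 3 by rewrite /rk_c sum_ord4.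
by rewrite !cE !upper_entries0 !addr0.
Qed.

Lemma explicit4_order4_not_pos_ok {d : R} : 0 < d -> rk_nonconfluent A -> rk_order4 A b ->
  ~ rk_pos_ok A b d.
Proof.
move=> d_gt0 noncon order ok.
have b_ge0 i : 0 <= b ord0 (inord i) := rk_pos_ok_b_ge0 d_gt0 ok (inord i).
have bA_ge0 i j : (j < i < 4)%N -> 0 <= b ord0 (inord i) * a i j.
  by case/andP=> ji i4; apply: (rk_pos_ok_bA_ge0 d_gt0 ok); rewrite !inordK // (ltn_trans ji i4).
have c_neq i j : (i < 4)%N -> (j < 4)%N -> i != j -> c i != c j.
  move=> i4 j4; apply: contra_neq => /noncon /(congr1 val).
  by rewrite /= !inordK.
(* The paper's stage [k + 1] is stage [k] here: [c 1] plays [c2], [a 2 1] plays [a32]. *)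
have [c0 _ c2E c3E] := explicit4_nodes.
move: order; rewrite /rk_order4 !sum_ord4 !upper_entries0 c0 !expr0n /=.
rewrite !(mul0r, mulr0, add0r, addr0) !addrA.
case=> _ [tree_c [tree_c2 [tree_Ac [tree_c3 [tree_cAc [tree_Ac2 tree_AAc]]]]]].
have c2_neq0 : c 1 != 0 by rewrite -c0 c_neq.
apply: (order4_positivity_absurd c2E c3E c2_neq0 (c_neq 1 2 _ _ _)
  tree_c tree_c2 tree_c3 tree_Ac tree_cAc tree_Ac2 tree_AAc) => //; exact: bA_ge0.
Qed.

End FourStages.

Lemma rk_gamma_eq0 (R : realType) (m : nat) (A : 'M[R]_m) (b : 'rV[R]_m) :
  (forall d, 0 < d -> ~ rk_pos_ok A b d) -> rk_gamma A b = (0 : R)%:E.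
Proof.
move=> not_ok; apply/eqP; rewrite eq_le ereal_sup_ubound ?andbT; last by left.
apply: ge_ereal_sup => _ [->|[d [_ ok] <-]] //.
by rewrite lee_fin leNgt; apply/negP => d_gt0; apply: not_ok ok.
Qed.

Theorem proposition7 (R : realType) (A : 'M[R]_4) (b : 'rV[R]_4) :
  rk_explicit A -> rk_nonconfluent A -> rk_order4 A b ->
  rk_gamma A b = (0 : R)%:E.
Proof.
move=> explicitA noncon order; apply: rk_gamma_eq0 => d d_gt0.
exact: (explicit4_order4_not_pos_ok explicitA d_gt0 noncon order).
Qed.
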